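(* Let $n\ge 2$ and $m\in\mathbb{N}$. The sequence \[ \big(t_2^m-t_1^m,\ t_3^m-t_2^m,\ \dots,\ t_{n-1}^m-t_{n-2}^m,\ -t_1^m\cdots t_{n-2}^m\,t_{n-1}^{2m}\big) \] is a regular sequence in $\mathbb{Q}[t_1,\dots,t_{n-1}]$. *)

From HB Require Import structures.
From mathcomp Require Import all_boot all_order all_algebra.
From mathcomp Require Import mpoly.

Set Implicit Arguments.
Unset Strict Implicit.
Unset Printing Implicit Defensive.

Import GRing.Theory.
Local Open Scope ring_scope.

Definition in_ideal (R : comNzRingType) (s : seq R) (g : R) : Prop :=
  exists c : seq R, size c = size s /\ g = \sum_(i < size s) c`_i * s`_i.

(* Regular sequence (s_1,...,s_r) in R: each s_i is a non-zero-divisor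
   on R/(s_1,...,s_{i-1}), and R/(s_1,...,s_r) <> 0. *)
Definition regular_seq (R : comNzRingType) (s : seq R) : Prop :=
  (forall i : nat, (i < size s)%N ->
     forall g : R, in_ideal (take i s) (s`_i * g) -> in_ideal (take i s) g)
  /\ ~ in_ideal s 1.

(* tvar k i = the variable t_{i+1} of Q[t_1,...,t_k] (0-indexed), 0 if i >= k *)
Definition tvar (k i : nat) : {mpoly rat[k]} :=
  match (insub i : option 'I_k) with Some j => 'X_j | None => 0 end.

Definition lemma_seq (n m : nat) : seq {mpoly rat[n.-1]} :=
  [seq tvar n.-1 i.+1 ^+ m - tvar n.-1 i ^+ m | i <- iota 0 (n - 2)] ++
  [:: - ((\prod_(i < n - 2) tvar n.-1 i ^+ m) * tvar n.-1 (n - 2) ^+ (2 * m))].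

From mathcomp Require Import all_boot all_order all_algebra.
From mathcomp Require Import mpoly.

(* Adjoin the binomials t_(i+1)^m - t_i^m one at a time.  Viewed as a
   polynomial in the fresh variable t_(i+1), with coefficients in the
   variables already used, the new binomial is monic; comparing coefficients
   in t_(i+1) shows that it is regular modulo the previous binomials and that
   it keeps regular every element free of t_(i+1).  Since t_(i+1)^m is
   congruent to t_i^m, every variable, hence the monomial
   t_1^m ... t_(n-2)^m t_(n-1)^(2m), is regular modulo all the binomials.
   Finally the ideal is proper because all generators vanish at the origin. *)

Set Implicit Arguments.
Unset Strict Implicit.
Unset Printing Implicit Defensive.

Import GRing.Theory.
Local Open Scope ring_scope.

Section IdealOfSeq.
Variable R : comNzRingType.
Implicit Types (s : seq R) (a f g h q : R).

Lemma in_idealP s g :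
  in_ideal s g <-> exists c : nat -> R, g = \sum_(i < size s) c i * s`_i.
Proof.
split=> [[c [_ ->]]|[c ->]]; first by exists (nth 0 c).
exists (mkseq c (size s)); rewrite size_mkseq; split=> //.
by apply: eq_bigr => i _; rewrite nth_mkseq.
Qed.

Lemma in_ideal0 s : in_ideal s 0.
Proof.
by apply/in_idealP; exists (fun=> 0); rewrite big1 // => i _; rewrite mul0r.
Qed.

Lemma in_idealD s g h : in_ideal s g -> in_ideal s h -> in_ideal s (g + h).
Proof.
move=> /in_idealP[c ->] /in_idealP[d ->]; apply/in_idealP.
exists (fun i => c i + d i).
by rewrite -big_split; apply: eq_bigr => i _; rewrite mulrDl.
Qed.

Lemma in_idealMl s a g : in_ideal s g -> in_ideal s (a * g).
Proof.
move=> /in_idealP[c ->]; apply/in_idealP; exists (fun i => a * c i).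
by rewrite mulr_sumr; apply: eq_bigr => i _; rewrite mulrA.
Qed.

Lemma in_idealMr s a g : in_ideal s g -> in_ideal s (g * a).
Proof. by rewrite mulrC; apply: in_idealMl. Qed.

Lemma in_idealN s g : in_ideal s g -> in_ideal s (- g).
Proof. by rewrite -mulN1r; apply: in_idealMl. Qed.

Lemma in_idealB s g h : in_ideal s g -> in_ideal s h -> in_ideal s (g - h).
Proof. by move=> Ig /in_idealN; apply: in_idealD. Qed.

Lemma in_ideal_sum s (I : Type) (r : seq I) (F : I -> R) :
  (forall i, in_ideal s (F i)) -> in_ideal s (\sum_(i <- r) F i).
Proof. by move=> IF; elim/big_ind: _ => //; [exact: in_ideal0 | exact: in_idealD]. Qed.

Lemma in_ideal_nth s i : (i < size s)%N -> in_ideal s s`_i.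
Proof.
move=> lt_i_s; apply/in_idealP; exists (fun j => (j == i)%:R).
rewrite (bigD1 (Ordinal lt_i_s)) //= eqxx mul1r big1 ?addr0 // => j.
by rewrite -val_eqE /= => /negbTE ->; rewrite mul0r.
Qed.

Lemma in_ideal_nil g : in_ideal [::] g <-> g = 0.
Proof. by split=> [/in_idealP[c ->]|->]; [rewrite big_ord0 | exact: in_ideal0]. Qed.

Lemma in_ideal_rcons s f g :
  in_ideal (rcons s f) g <-> exists q c, in_ideal s q /\ g = q + c * f.
Proof.
rewrite in_idealP; split=> [[c ->]|[q [c [/in_idealP[d ->] ->]]]].
  rewrite size_rcons big_ord_recr /= nth_rcons ltnn eqxx.
  exists (\sum_(i < size s) c i * (rcons s f)`_i), (c (size s)); split=> //.
  by apply/in_idealP; exists c; apply: eq_bigr => i _; rewrite nth_rcons ltn_ord.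
exists (fun i => if i == size s then c else d i).
rewrite size_rcons big_ord_recr /= nth_rcons ltnn !eqxx; congr (_ + _).
by apply: eq_bigr => i _; rewrite nth_rcons ltn_ord ltn_eqF.
Qed.

Lemma in_ideal_rconsl s f g : in_ideal s g -> in_ideal (rcons s f) g.
Proof. by move=> Ig; apply/in_ideal_rcons; exists g, 0; rewrite mul0r addr0. Qed.

Lemma in_ideal_rcons_last s f : in_ideal (rcons s f) f.
Proof.
by apply/in_ideal_rcons; exists 0, 1; rewrite mul1r add0r; split; first exact: in_ideal0.
Qed.

Definition regular_mod s h := forall g, in_ideal s (h * g) -> in_ideal s g.

Lemma regular_mod1 s : regular_mod s 1.
Proof. by move=> g; rewrite mul1r. Qed.

Lemma regular_modN s h : regular_mod s h -> regular_mod s (- h).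
Proof. by move=> Rh g; rewrite mulNr => /in_idealN; rewrite opprK; apply: Rh. Qed.

Lemma regular_modM s h h' :
  regular_mod s h -> regular_mod s h' -> regular_mod s (h * h').
Proof. by move=> Rh Rh' g; rewrite -mulrA => /Rh /Rh'. Qed.

Lemma regular_modX s h e : regular_mod s h -> regular_mod s (h ^+ e).
Proof.
move=> Rh; elim: e => [|e IHe]; first by rewrite expr0; apply: regular_mod1.
by rewrite exprS; apply: regular_modM.
Qed.

Lemma regular_mod_prod s (I : Type) (r : seq I) (F : I -> R) :
  (forall i, regular_mod s (F i)) -> regular_mod s (\prod_(i <- r) F i).
Proof.
by move=> RF; elim/big_ind: _ => //; [apply: regular_mod1 | apply: regular_modM].
Qed.

End IdealOfSeq.

Lemma rmorph_in_ideal_eq0 (R : comNzRingType) (S : pzRingType)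
    (phi : {rmorphism R -> S}) (s : seq R) (g : R) :
  {in s, forall a, phi a = 0} -> in_ideal s g -> phi g = 0.
Proof.
move=> phi_s /in_idealP[c ->]; rewrite rmorph_sum big1 // => i _.
by rewrite rmorphM [phi s`_i]phi_s ?mulr0 // mem_nth.
Qed.

Section PolynomialVariable.
Variables (R : comNzRingType) (coefs : {rmorphism R -> {poly R}}) (x : R).
Hypothesis coefsX : coefs x = 'X.
Hypothesis coefsK : forall g, (coefs g).[x] = g.
(* [coefs] presents [R] as a polynomial ring in [x] over the [x]-free elements. *)
Implicit Types (s : seq R) (a g h : R).

Definition xfree a := coefs a = a%:P.

Lemma xfreeB a b : xfree a -> xfree b -> xfree (a - b).
Proof. by rewrite /xfree rmorphB polyCB => -> ->. Qed.

Lemma xfreeX a e : xfree a -> xfree (a ^+ e).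
Proof. by rewrite /xfree rmorphXn polyC_exp => ->. Qed.

Lemma in_ideal_coefsP s g : {in s, forall a, xfree a} ->
  in_ideal s g <-> forall e, in_ideal s (coefs g)`_e.
Proof.
move=> free_s; split=> [/in_idealP[c ->] e|Ig].
  rewrite rmorph_sum coef_sum; apply: in_ideal_sum => i.
  rewrite rmorphM [coefs s`_i]free_s ?mem_nth // coefMC.
  exact/in_idealMl/in_ideal_nth.
by rewrite -[g]coefsK horner_coef; apply: in_ideal_sum => i; apply: in_idealMr.
Qed.

(* Comparing coefficients of degree [e + m] in [(x^m - a) g] gives
   [g_e = ((x^m - a) g)_(e+m) + a g_(e+m)], so membership of the
   coefficients of [g] propagates downwards from the top degree. *)
Lemma regular_mod_XnB s a m :
  (0 < m)%N -> xfree a -> {in s, forall b, xfree b} -> regular_mod s (x ^+ m - a).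
Proof.
move=> m_gt0 free_a free_s g /(in_ideal_coefsP _ free_s) Ifg.
apply/(in_ideal_coefsP _ free_s); set G := coefs g.
have coef_fg e : G`_e = (coefs ((x ^+ m - a) * g))`_(e + m) + a * G`_(e + m).
  rewrite rmorphM rmorphB rmorphXn coefsX free_a mulrBl coefB coefXnM coefCM.
  by rewrite ltnNge leq_addl addnK subrK.
suff IG d e : (size G <= e + d)%N -> in_ideal s G`_e.
  by move=> e; apply: (IG (size G)); rewrite leq_addl.
elim: d e => [|d IHd] e le_G_ed.
  by rewrite addn0 in le_G_ed; rewrite nth_default //; apply: in_ideal0.
rewrite coef_fg; apply/in_idealD/in_idealMl/IHd => //.
by rewrite -addnA (leq_trans le_G_ed) // leq_add2l addnC -addn1 leq_add2l.
Qed.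

(* Modulo [rcons s h], [(x^m - a) c] vanishes, so [c] lies in [(s, h)] by
   [regular_mod_XnB]; writing [c = q' + c' h] reduces the claim to [s]. *)
Lemma regular_mod_rconsXnB s a h m : (0 < m)%N -> xfree a -> xfree h ->
    {in s, forall b, xfree b} -> regular_mod s h ->
  regular_mod (rcons s (x ^+ m - a)) h.
Proof.
move=> m_gt0 free_a free_h free_s Rh g /in_ideal_rcons[q [c [Iq hg_eq]]].
set f := x ^+ m - a in hg_eq *.
have /in_ideal_rcons[q' [c' [Iq' c_eq]]] : in_ideal (rcons s h) c.
  apply: (@regular_mod_XnB _ a m) => //.
    by move=> b; rewrite mem_rcons inE => /predU1P[->|/free_s].
  have -> : f * c = h * g - q by rewrite hg_eq mulrC addrC addKr.
  by apply/in_idealB; [apply/in_idealMr/in_ideal_rcons_last | apply: in_ideal_rconsl].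
apply/in_ideal_rcons; exists (g - c' * f), c'; split; last by rewrite subrK.
apply: Rh; have -> : h * (g - c' * f) = q + q' * f.
  by rewrite mulrBr hg_eq c_eq mulrDl -mulrA [h * (c' * f)]mulrCA addrA addrK.
by apply/in_idealD/in_idealMr.
Qed.

End PolynomialVariable.

Section MPolyAsPolyInVariable.
Variables (R : comNzRingType) (k : nat) (v : 'I_k).

Definition mvar_poly : {mpoly R[k]} -> {poly {mpoly R[k]}} :=
  mmap (polyC \o @mpolyC k R) (fun i => if i == v then 'X else ('X_i)%:P).

Lemma mvar_polyX : mvar_poly 'X_v = 'X.
Proof. by rewrite /mvar_poly mmapX mmap1U eqxx. Qed.

Lemma mvar_polyXn i : i != v -> mvar_poly 'X_i = ('X_i)%:P.
Proof. by move=> /negbTE ne_iv; rewrite /mvar_poly mmapX mmap1U ne_iv. Qed.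

Lemma mvar_polyK p : (mvar_poly p).['X_v] = p.
Proof.
rewrite -horner_evalE /mvar_poly /mmap rmorph_sum /= [RHS]mpolyE.
apply/eq_bigr => m _.
rewrite rmorphM rmorph_prod /= horner_evalE hornerC (@mpolyXE_id _ _ m) mul_mpolyC.
congr (_ *: _); apply: eq_bigr => i _; rewrite rmorphXn /= horner_evalE.
by case: eqP => [->|_]; rewrite ?hornerX ?hornerC.
Qed.

End MPolyAsPolyInVariable.

Section TVar.
Variable k : nat.

Lemma tvarE j (lt_jk : (j < k)%N) : tvar k j = 'X_(Ordinal lt_jk).
Proof. by rewrite /tvar insubT. Qed.

Lemma tvar_default j : (k <= j)%N -> tvar k j = 0.
Proof. by move=> le_kj; rewrite /tvar insubF // ltnNge le_kj. Qed.

Lemma xfree_tvar (v : 'I_k) j : j != v :> nat -> xfree (mvar_poly v) (tvar k j).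
Proof.
move=> ne_jv; rewrite /xfree; case: (ltnP j k) => [lt_jk|le_kj].
  by rewrite tvarE; apply: mvar_polyXn; rewrite -val_eqE.
by rewrite tvar_default // rmorph0.
Qed.

Lemma tvar_neq0 j : (j < k)%N -> tvar k j != 0.
Proof.
move=> lt_jk; rewrite tvarE; apply/eqP => /(congr1 (mcoeff U_(Ordinal lt_jk))).
by rewrite mcoeffX eqxx mcoeff0 => /eqP; rewrite oner_eq0.
Qed.

Lemma meval0_tvar j : meval (fun=> 0) (tvar k j) = 0.
Proof.
case: (ltnP j k) => [lt_jk|le_kj]; first by rewrite tvarE mevalXU.
by rewrite tvar_default // rmorph0.
Qed.

End TVar.

Section Generators.
Variables p m : nat.
Hypothesis m_gt0 : (0 < m)%N.
Local Notation k := p.+1.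
Local Notation t := (tvar k).

Definition tdiff l : {mpoly rat[k]} := t l.+1 ^+ m - t l ^+ m.
Definition tdiffs r := map tdiff (iota 0 r).
Definition tmonomial : {mpoly rat[k]} :=
  - ((\prod_(i < p) t i ^+ m) * t p ^+ (2 * m)).
Definition tgens := tdiffs p ++ [:: tmonomial].

Lemma tdiffsS r : tdiffs r.+1 = rcons (tdiffs r) (tdiff r).
Proof. by rewrite /tdiffs -[r.+1]addn1 iotaD map_cat cats1. Qed.

Lemma size_tdiffs r : size (tdiffs r) = r.
Proof. by rewrite size_map size_iota. Qed.

Lemma nth_tdiffs r i : (i < r)%N -> (tdiffs r)`_i = tdiff i.
Proof. by move=> lt_ir; rewrite (nth_map 0%N) ?size_iota // nth_iota. Qed.

Lemma take_tdiffs r i : (i <= r)%N -> take i (tdiffs r) = tdiffs i.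
Proof. by move=> le_ir; rewrite -map_take take_iota (minn_idPl le_ir). Qed.

Lemma xfree_tdiffs r (v : 'I_k) : (r < v)%N ->
  {in tdiffs r, forall a, xfree (mvar_poly v) a}.
Proof.
move=> lt_rv a /mapP[l]; rewrite mem_iota add0n => lt_lr ->.
by apply: xfreeB; apply/xfreeX/xfree_tvar;
  rewrite neq_ltn (leq_trans _ lt_rv) ?orbT // ltnW.
Qed.

Lemma regular_mod_tdiff i : (i < p)%N -> regular_mod (tdiffs i) (tdiff i).
Proof.
move=> lt_ip; pose v : 'I_k := Ordinal (lt_ip : i.+1 < k)%N.
rewrite /tdiff (tvarE (lt_ip : i.+1 < k)%N).
apply: (regular_mod_XnB (mvar_polyX _ v) (@mvar_polyK _ _ v)) => //.
  by apply/xfreeX/xfree_tvar; rewrite /= neq_ltn ltnSn.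
exact: xfree_tdiffs.
Qed.

(* The new variable [t_(r+1)] is regular because [t_(r+1)^m = t_r^m]
   modulo [tdiff r], and [t_r] is already regular. *)
Lemma regular_mod_tvar r j :
  (r <= p)%N -> (j <= r)%N -> regular_mod (tdiffs r) (t j).
Proof.
elim: r j => [|r IHr] j le_rp.
  rewrite leqn0 => /eqP-> g /in_ideal_nil/eqP.
  by rewrite mulf_eq0 (negbTE (tvar_neq0 _)) //= => /eqP->; apply/in_ideal_nil.
pose v : 'I_k := Ordinal (le_rp : r.+1 < k)%N.
have regular_below j' : (j' <= r)%N -> regular_mod (tdiffs r.+1) (t j').
  move=> le_j'r; rewrite tdiffsS /tdiff (tvarE (le_rp : r.+1 < k)%N).
  apply: (regular_mod_rconsXnB (mvar_polyX _ v) (@mvar_polyK _ _ v)) => //.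
  - by apply/xfreeX/xfree_tvar; rewrite /= neq_ltn ltnSn.
  - by apply: xfree_tvar; rewrite /= neq_ltn ltnS le_j'r.
  - exact: xfree_tdiffs.
  - by apply: IHr => //; apply: ltnW.
rewrite leq_eqVlt => /predU1P[->|]; last exact: regular_below.
move=> g Ig; apply: (regular_modX (e := m) (regular_below r (leqnn r))).
have -> : t r ^+ m * g = t r.+1 ^+ m.-1 * (t r.+1 * g) - tdiff r * g.
  by rewrite mulrA -exprSr prednK // /tdiff mulrBl opprB addrC subrK.
apply: in_idealB; first exact: in_idealMl.
by rewrite tdiffsS; apply/in_idealMr/in_ideal_rcons_last.
Qed.

Lemma regular_mod_tmonomial : regular_mod (tdiffs p) tmonomial.
Proof.
apply/regular_modN/regular_modM; last exact/regular_modX/regular_mod_tvar.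
by apply: regular_mod_prod => i; apply/regular_modX/regular_mod_tvar => //; apply: ltnW.
Qed.

Lemma meval0_tgens : {in tgens, forall a, meval (fun=> 0) a = 0}.
Proof.
move=> a; rewrite /tgens mem_cat mem_seq1 => /orP[/mapP[l _ ->]|/eqP->].
  by rewrite rmorphB !rmorphXn /= !meval0_tvar subrr.
rewrite rmorphN rmorphM rmorphXn /= meval0_tvar expr0n muln_eq0 /=.
by rewrite eqn0Ngt m_gt0 mulr0 oppr0.
Qed.

Lemma regular_seq_tgens : regular_seq tgens.
Proof.
split=> [i|]; last first.
  by move=> /(rmorph_in_ideal_eq0 meval0_tgens)/eqP; rewrite rmorph1 oner_eq0.
rewrite /tgens size_cat size_tdiffs addn1 ltnS leq_eqVlt => /predU1P[->|lt_ip].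
  rewrite take_size_cat ?size_tdiffs // nth_cat size_tdiffs ltnn subnn.
  exact: regular_mod_tmonomial.
rewrite take_cat nth_cat size_tdiffs lt_ip take_tdiffs ?nth_tdiffs //; last exact: ltnW.
exact: regular_mod_tdiff.
Qed.

End Generators.

Theorem lemma3p5 (n m : nat) (hn : (2 <= n)%N) (hm : (1 <= m)%N) :
  regular_seq (lemma_seq n m).
Proof.
case: n hn => [|[|p]] // _.
have -> : lemma_seq p.+2 m = tgens p m by rewrite /lemma_seq subSS subSS subn0.
exact: regular_seq_tgens.
Qed.
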